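(* Let $k\ge2$ and let $\mathcal C_1$ be the binary code with generator matrix $[I_k\ \tilde G_k]$. Then every erasure pattern with at most $k-1$ erasures allows for parallel easy repair.
   Context: $\tilde G_k$ denotes the $k\times\frac{k(k-1)}{2}$ binary matrix whose columns are all vectors of $\mathbb F_2^k$ of Hamming weight $2$; $\mathcal C_1$ has length $n=\frac{k(k+1)}{2}$ and minimum distance $k$. Let $g_1,\dots,g_n$ be the columns of $[I_k\ \tilde G_k]$; nodes are the coordinates $c_1,\dots,c_n$ of codewords $c=u[I_k\ \tilde G_k]$. An erasure pattern is a set of erased nodes; the others are live. A node $c_i$ is related to distinct nodes $c_{j_1},\dots,c_{j_\gamma}$ (all different from $c_i$) if $g_i=g_{j_1}+\dots+g_{j_\gamma}$. An erased node allows for easy repair if it is related to $\gamma\le 2$ live nodes. An erasure pattern allows for parallel easy repair if each erased node allows for easy repair with respect to the original set of live nodes. *)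

From mathcomp Require Import all_boot all_algebra.
Set Implicit Arguments. Unset Strict Implicit. Unset Printing Implicit Defensive.
Import GRing.Theory.
Local Open Scope ring_scope.

(* Index set of the columns of tilde G_k: unordered pairs {i,j}, i<j, of 'I_k. *)
Definition wt2_index (k : nat) := {p : 'I_k * 'I_k | (p.1 < p.2)%N}.

(* Nodes of C_1 = coordinates = columns of [I_k  tilde G_k]:
   inl i  <-> the i-th column of I_k (the unit vector e_i),
   inr {i,j} <-> the column e_i + e_j of tilde G_k. *)
Definition node (k : nat) := ('I_k + wt2_index k)%type.

Definition unitv (k : nat) (i : 'I_k) : 'rV['F_2]_k := delta_mx 0 i.

Definition gcol (k : nat) (x : node k) : 'rV['F_2]_k :=
  match x with
  | inl i => unitv i
  | inr p => unitv (val p).1 + unitv (val p).2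
  end.

Definition related (k : nat) (x : node k) (S : {set node k}) : Prop :=
  (0 < #|S|)%N /\ x \notin S /\ gcol x = \sum_(y in S) gcol y.

Definition easy_repair (k : nat) (L : {set node k}) (x : node k) : Prop :=
  exists S : {set node k}, [/\ S \subset L, (#|S| <= 2)%N & related x S].

Definition parallel_easy_repair (k : nat) (E : {set node k}) : Prop :=
  forall x, x \in E -> easy_repair (~: E) x.

(* The columns summing to an erased column g_x split into pairwise disjoint
   pairs {y, z}, g_y + g_z = g_x, and there are k - 1 of them: for g_x = e_i
   the pairs {e_t, e_i + e_t}, t <> i; for g_x = e_a + e_b the pair {e_a, e_b}
   and the pairs {e_a + e_t, e_t + e_b}, t <> a, b.  Each of the at most k - 2
   other erased nodes lies in at most one pair, so some pair is entirely live. *)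

From mathcomp Require Import all_boot all_algebra.
Set Implicit Arguments. Unset Strict Implicit. Unset Printing Implicit Defensive.
Import GRing.Theory.
Local Open Scope ring_scope.

Lemma exists_notin_imset (aT rT : finType) (f : aT -> rT) (A : {set aT})
    (B : {set rT}) :
  (#|A| < #|B|)%N -> exists2 b, b \in B & b \notin f @: A.
Proof.
move=> ltAB; apply/exists_inP; rewrite -negb_forall_in; apply: contraTN ltAB.
move=> /forall_inP sBfA; rewrite -leqNgt.
apply: leq_trans (leq_imset_card f A).
by apply/subset_leq_card/subsetP => b /sBfA.
Qed.

Lemma setU1D_subset (T : finType) (t : T) (A B : {set T}) :
  t \notin A -> B \subset A -> ([set t] :|: B) :\: A = [set t].
Proof.
move=> tNA sBA; apply/setP => u; rewrite !inE.
have [-> | _] := eqVneq u t; first by rewrite tNA.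
by case: (boolP (u \in B)) => [/(subsetP sBA) ->|]; rewrite ?andbF.
Qed.

Section Columns.

Variable k : nat.
Implicit Types (i j : 'I_k) (x y z : node k) (v : 'rV['F_2]_k).

Lemma addrr_F2 v : v + v = 0.
Proof. by apply/matrixP => i j; rewrite !mxE addrr_pchar2 // pchar_Fp. Qed.

Lemma gcol_neq0 x : gcol x != 0.
Proof.
apply/negP => /eqP/matrixP gx0.
case: x gx0 => [i | [[a b] /= ltab]] gx0.
  by move: (gx0 0 i); rewrite !mxE !eqxx.
have /negbTE neq_ab : a != b by rewrite neq_ltn ltab.
by move: (gx0 0 a); rewrite !mxE !eqxx neq_ab addr0 => /eqP; rewrite oner_eq0.
Qed.

Lemma repair_pair_neq x y z :
  gcol x = gcol y + gcol z -> [/\ y != z, x != y & x != z].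
Proof.
move=> gxyz; split; apply/eqP => eq_nodes; move: gxyz; rewrite eq_nodes.
- by rewrite addrr_F2; apply/eqP; rewrite gcol_neq0.
- rewrite -{1}[gcol y]addr0 => /addrI/esym/eqP.
  by rewrite (negbTE (gcol_neq0 z)).
- rewrite addrC -{1}[gcol z]addr0 => /addrI/esym/eqP.
  by rewrite (negbTE (gcol_neq0 y)).
Qed.

Definition edge i j : node k :=
  if insub (if (i < j)%N then (i, j) else (j, i)) is Some p then inr p else inl i.

Lemma edgeP i j : i != j ->
  exists2 p : wt2_index k, edge i j = inr p & val p = (i, j) \/ val p = (j, i).
Proof.
rewrite /edge neq_ltn => neq_ij.
case: ltngtP neq_ij => // [lt_ij | lt_ji] _; rewrite insubT /=;
  by eexists; [reflexivity | auto].
Qed.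

Lemma gcol_edge i j : i != j -> gcol (edge i j) = unitv i + unitv j.
Proof. by case/edgeP => p -> /= [] ->; rewrite // addrC. Qed.

Definition supp x : {set 'I_k} :=
  match x with inl i => [set i] | inr p => [set (val p).1; (val p).2] end.

Lemma supp_edge i j : i != j -> supp (edge i j) = [set i; j].
Proof. by case/edgeP => p -> /= [] ->; rewrite // setUC. Qed.

(* Tagging the pair {y, z} by supp y :\: supp x = supp z :\: supp x makes
   distinct pairs disjoint. *)
Lemma repair_pairs x : exists2 T : {set {set 'I_k}}, #|T| = (k - 1)%N &
  forall S, S \in T -> exists y z,
    [/\ gcol x = gcol y + gcol z, supp y :\: supp x = S & supp z :\: supp x = S].
Proof.
case: x => [i | p].
  exists [set [set t] | t in [set~ i]].
    by rewrite card_imset ?cardsC1 ?card_ord ?subn1 //; exact: set1_inj.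
  move=> S /imsetP[t]; rewrite !inE => neq_ti ->.
  have neq_it : i != t by rewrite eq_sym.
  exists (inl t), (edge i t); rewrite gcol_edge // supp_edge //=; split.
  - by rewrite addrCA addrr_F2 addr0.
  - by apply/setDidPl; rewrite disjoints1 inE.
  - by rewrite setUC setU1D_subset ?inE.
case: p => [[a b] /= lt_ab].
have neq_ab : a != b by rewrite neq_ltn lt_ab.
exists (set0 |: [set [set t] | t in ~: [set a; b]]).
  have k_ge2 : (2 <= k)%N.
    by rewrite (leq_trans _ (leq_ltn_trans lt_ab (ltn_ord b))).
  rewrite cardsU1 card_imset; last exact: set1_inj.
  have -> : set0 \notin [set [set t] | t in ~: [set a; b]].
    by apply/imsetP => -[t _] /setP /(_ t); rewrite !inE eqxx.
  by rewrite cardsCs setCK cards2 neq_ab card_ord add1n -subSn // subSS.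
move=> S; rewrite !inE => /orP[/eqP -> | /imsetP[t]].
  exists (inl a), (inl b).
  by split => //=; apply/eqP; rewrite setD_eq0 sub1set !inE eqxx ?orbT.
rewrite inE => tNab ->.
have [neq_ta neq_tb] : t != a /\ t != b by move: tNab; rewrite !inE negb_or => /andP.
have neq_at : a != t by rewrite eq_sym.
exists (edge a t), (edge t b); rewrite !gcol_edge // !supp_edge //=; split.
- by rewrite addrA -(addrA (unitv a)) addrr_F2 addr0.
- by rewrite setUC setU1D_subset // sub1set !inE eqxx.
- by rewrite setU1D_subset // sub1set !inE eqxx orbT.
Qed.

End Columns.

Section Repair.

Variables (k : nat) (E : {set node k}) (x : node k).
Hypothesis xE : x \in E.

Lemma easy_repair_of_pair y z :
  gcol x = gcol y + gcol z -> y \notin E -> z \notin E -> easy_repair (~: E) x.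
Proof.
move=> gxyz yNE zNE; have [neq_yz neq_xy neq_xz] := repair_pair_neq gxyz.
exists [set y; z]; split; first by apply/subsetP => w; rewrite !inE => /orP[] /eqP ->.
  by rewrite cards2 neq_yz.
split; first by rewrite cards2.
split; first by rewrite !inE negb_or neq_xy neq_xz.
by rewrite big_setU1 /= ?big_set1 // inE.
Qed.

Lemma easy_repair_of_owned_pairs (I : finType) (T : {set I}) (own : node k -> I) :
  (#|E| <= #|T|)%N ->
  (forall t, t \in T ->
     exists y z, [/\ gcol x = gcol y + gcol z, own y = t & own z = t]) ->
  easy_repair (~: E) x.
Proof.
rewrite (cardsD1 x E) xE => ltET pairs.
have [t tT tNown] := exists_notin_imset own ltET.
have [y [z [gxyz own_y own_z]]] := pairs t tT.
have [_ neq_xy neq_xz] := repair_pair_neq gxyz.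
have live w : own w = t -> x != w -> w \notin E.
  move=> own_w neq_xw; apply: contra tNown => wE.
  by rewrite -own_w imset_f // !inE eq_sym neq_xw.
exact: easy_repair_of_pair gxyz (live y own_y neq_xy) (live z own_z neq_xz).
Qed.

End Repair.

Theorem theorem4p2 (k : nat) (hk : (2 <= k)%N) (E : {set node k}) :
  (#|E| <= k - 1)%N -> parallel_easy_repair E.
Proof.
move=> leEk x xE; have [T cardT pairsT] := repair_pairs x.
apply: (easy_repair_of_owned_pairs xE (own := fun y => supp y :\: supp x)) pairsT.
by rewrite cardT.
Qed.
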